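(* Let $\boldsymbol\mu\in\mathbb R^N$ with $\boldsymbol\mu\geq\mathbf 0$. There exists a power vector $\mathbf p^*\in\mathbb R^N$, $\mathbf p^*\geq\mathbf 0$, with $\Gamma(\mathbf p^* )=\boldsymbol\mu$ if and only if there exists a power vector $\mathbf p'\in\mathbb R^N$, $\mathbf p'\geq\mathbf 0$, with $\Gamma(\mathbf p')\geq\boldsymbol\mu$.
   Context: Multicast system: $N\geq 2$ transmitters $T_1,\dots,T_N$; transmitter $T_i$ has $K_i\geq 1$ receivers $R_i^{k}$, $k\in\mathcal K_i=\{1,\dots,K_i\}$. The channel gain from $T_j$ to $R_i^{k}$ is $g_{r_i^{k},t_j}\geq 0$, with direct gains $g_{r_i^{k},t_i}>0$; the noise variance is $\sigma^2>0$. For $\mathbf p=(p_1,\dots,p_N)^T\geq\mathbf 0$ the SINR of $R_i^k$ is $\gamma_i^{k}(\mathbf p)=\frac{g_{r_i^{k},t_i}p_i}{\sum_{j\neq i}g_{r_i^{k},t_j}p_j+\sigma^2}$, the SINR of session $i$ is $\gamma_i(\mathbf p)=\min_{k\in\mathcal K_i}\gamma_i^{k}(\mathbf p)$, and $\Gamma(\mathbf p)=(\gamma_1(\mathbf p),\dots,\gamma_N(\mathbf p))$. Vector inequalities are componentwise. *)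

From Stdlib Require Import Reals List.
Open Scope R_scope.

(* Transmitters are indexed by i in {0,...,N-1}; receivers of T_i by
   k in {0,...,K i - 1}.  g i k j is the gain g_{r_i^k, t_j} from T_j to R_i^k.
   Power vectors are functions p : nat -> R (only indices < N matter). *)

Definition interference (N : nat) (g : nat -> nat -> nat -> R)
  (p : nat -> R) (i k : nat) : R :=
  fold_right Rplus 0
    (map (fun j => if Nat.eq_dec j i then 0 else g i k j * p j) (seq 0 N)).

Definition sinr_rx (N : nat) (g : nat -> nat -> nat -> R) (sigma2 : R)
  (p : nat -> R) (i k : nat) : R :=
  g i k i * p i / (interference N g p i k + sigma2).

(* SINR of session i : min over k < K i (K i >= 1; the fold is seeded
   with the k = 0 term, so it is exactly the minimum over 0..K i - 1). *)
Definition sinr_session (N : nat) (K : nat -> nat) (g : nat -> nat -> nat -> R)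
  (sigma2 : R) (p : nat -> R) (i : nat) : R :=
  fold_right Rmin (sinr_rx N g sigma2 p i 0)
    (map (sinr_rx N g sigma2 p i) (seq 0 (K i))).

(* Write the SINR of session i as p_i / I_i(p), where I_i(p) is the largest
   over its receivers k of (interference + sigma^2) / g_{r_i^k,t_i}.  I_i is
   positive and monotone, so T p := (mu_i I_i(p))_i is a monotone map, and a
   power vector p' with Gamma(p') >= mu is exactly one with T p' <= p'.  On the
   box [0, p'] the supremum of all x with x <= T x is then a fixed point of T
   (Knaster-Tarski), and a fixed point of T is a power vector with
   Gamma = mu. *)

From Stdlib Require Import Reals List Lra Lia.
Open Scope R_scope.

Lemma fold_right_Rplus_map_le (l : list nat) (f h : nat -> R) :
  (forall x, In x l -> f x <= h x) ->
  fold_right Rplus 0 (map f l) <= fold_right Rplus 0 (map h l).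
Proof.
  induction l as [|a l IH]; simpl; intros Hfh; [lra|].
  assert (f a <= h a) by auto.
  assert (fold_right Rplus 0 (map f l) <= fold_right Rplus 0 (map h l)) by auto.
  lra.
Qed.

Lemma fold_right_Rplus_map_nonneg (l : list nat) (f : nat -> R) :
  (forall x, In x l -> 0 <= f x) -> 0 <= fold_right Rplus 0 (map f l).
Proof.
  induction l as [|a l IH]; simpl; intros Hf; [lra|].
  assert (0 <= f a) by auto.
  assert (0 <= fold_right Rplus 0 (map f l)) by auto.
  lra.
Qed.

Lemma fold_right_Rmax_seed_le (l : list nat) (f : nat -> R) a :
  a <= fold_right Rmax a (map f l).
Proof.
  induction l as [|x l IH]; simpl; [lra|].
  eapply Rle_trans; [apply IH|apply Rmax_r].
Qed.

Lemma fold_right_Rmax_map_le (l : list nat) (f h : nat -> R) a b :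
  a <= b -> (forall x, In x l -> f x <= h x) ->
  fold_right Rmax a (map f l) <= fold_right Rmax b (map h l).
Proof.
  induction l as [|x l IH]; simpl; intros Hab Hfh; [lra|].
  assert (f x <= h x) by auto.
  assert (fold_right Rmax a (map f l) <= fold_right Rmax b (map h l)) by auto.
  apply Rmax_lub; eapply Rle_trans; [|apply Rmax_l| |apply Rmax_r]; eauto.
Qed.

Lemma Rmin_div_Rmax a x y : 0 <= a -> 0 < x -> 0 < y ->
  Rmin (a / x) (a / y) = a / Rmax x y.
Proof.
  intros Ha Hx Hy. unfold Rmin, Rmax.
  destruct (Rle_dec x y) as [Hxy|Hxy]; destruct (Rle_dec (a / x) (a / y)) as [H|H];
    auto.
  - apply Rle_antisym; auto. unfold Rdiv. apply Rmult_le_compat_l; auto.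
    apply Rinv_le_contravar; auto.
  - exfalso; apply H. unfold Rdiv. apply Rmult_le_compat_l; auto.
    apply Rinv_le_contravar; lra.
Qed.

Lemma fold_right_Rmin_div (l : list nat) a c0 (c : nat -> R) :
  0 <= a -> 0 < c0 -> (forall x, In x l -> 0 < c x) ->
  fold_right Rmin (a / c0) (map (fun x => a / c x) l) =
  a / fold_right Rmax c0 (map c l).
Proof.
  intros Ha Hc0. induction l as [|x l IH]; simpl; intros Hc; auto.
  rewrite IH by auto. apply Rmin_div_Rmax; auto.
  pose proof (fold_right_Rmax_seed_le l c c0); lra.
Qed.

Section MonotoneFixpoint.

Variable N : nat.
Variable T : (nat -> R) -> nat -> R.
Variable b : nat -> R.

Hypothesis T_monotone : forall x y, (forall j, (j < N)%nat -> x j <= y j) ->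
  forall i, (i < N)%nat -> T x i <= T y i.
Hypothesis T_zero_nonneg : forall i, (i < N)%nat -> 0 <= T (fun _ => 0) i.
Hypothesis b_nonneg : forall i, (i < N)%nat -> 0 <= b i.
Hypothesis T_b_le : forall i, (i < N)%nat -> T b i <= b i.

(* Vectors are padded with zeros beyond N so that each coordinate of the
   supremum is bounded. *)
Definition subfixpoint_in_box (x : nat -> R) : Prop :=
  (forall i, (i < N)%nat -> 0 <= x i <= b i) /\
  (forall i, (N <= i)%nat -> x i = 0) /\
  (forall i, (i < N)%nat -> x i <= T x i).

Definition coordinate_values (i : nat) (r : R) : Prop :=
  exists x, subfixpoint_in_box x /\ r = x i.

Lemma subfixpoint_in_box_zero : subfixpoint_in_box (fun _ => 0).
Proof.
  split; [|split]; auto.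
  intros i Hi; split; [lra|auto].
Qed.

Lemma coordinate_values_bound (i : nat) : bound (coordinate_values i).
Proof.
  exists (Rmax (b i) 0). intros r [x [[Hbox [Hpad _]] ->]].
  destruct (Nat.lt_ge_cases i N) as [Hi|Hi].
  - specialize (Hbox i Hi). pose proof (Rmax_l (b i) 0); lra.
  - rewrite Hpad by auto. apply Rmax_r.
Qed.

Lemma coordinate_values_inhabited (i : nat) : exists r, coordinate_values i r.
Proof. exists 0, (fun _ => 0). split; [apply subfixpoint_in_box_zero|auto]. Qed.

Definition subfixpoint_sup (i : nat) : R :=
  proj1_sig (completeness _ (coordinate_values_bound i)
                            (coordinate_values_inhabited i)).

Lemma subfixpoint_sup_lub (i : nat) :
  is_lub (coordinate_values i) (subfixpoint_sup i).
Proof. exact (proj2_sig (completeness _ _ _)). Qed.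

Lemma subfixpoint_sup_ge x i :
  subfixpoint_in_box x -> x i <= subfixpoint_sup i.
Proof. intros Hx. apply (proj1 (subfixpoint_sup_lub i)). exists x; auto. Qed.

Lemma subfixpoint_sup_le_T i : (i < N)%nat ->
  subfixpoint_sup i <= T subfixpoint_sup i.
Proof.
  intros Hi. apply (proj2 (subfixpoint_sup_lub i)).
  intros r [x [Hx ->]]. destruct Hx as [Hbox [Hpad Hsub]].
  apply Rle_trans with (T x i); auto.
  apply T_monotone; auto.
  intros j _. apply subfixpoint_sup_ge. split; auto.
Qed.

Lemma subfixpoint_sup_in_box : subfixpoint_in_box subfixpoint_sup.
Proof.
  split; [|split].
  - intros i Hi. split.
    + apply (subfixpoint_sup_ge (fun _ => 0)), subfixpoint_in_box_zero.
    + apply (proj2 (subfixpoint_sup_lub i)). intros r [x [[Hbox _] ->]]. apply Hbox; auto.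
  - intros i Hi. apply Rle_antisym.
    + apply (proj2 (subfixpoint_sup_lub i)).
      intros r [x [[_ [Hpad _]] ->]]. rewrite Hpad by auto; lra.
    + apply (subfixpoint_sup_ge (fun _ => 0)), subfixpoint_in_box_zero.
  - exact subfixpoint_sup_le_T.
Qed.

Lemma monotone_box_fixpoint :
  exists u, (forall i, (i < N)%nat -> 0 <= u i) /\
            (forall i, (i < N)%nat -> T u i = u i).
Proof.
  pose proof subfixpoint_sup_in_box as [Hbox [Hpad Hsub]].
  set (u := subfixpoint_sup) in *.
  set (v := fun i => if Compare_dec.lt_dec i N then T u i else 0).
  assert (Hv : subfixpoint_in_box v).
  { assert (Hvi : forall i, (i < N)%nat -> v i = T u i).
    { intros i Hi. unfold v. destruct Compare_dec.lt_dec; [auto|lia]. }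
    split; [|split]; intros i Hi.
    - rewrite Hvi by auto. split.
      + apply Rle_trans with (T (fun _ => 0) i); auto.
        apply T_monotone; auto. intros j Hj. apply Hbox; auto.
      + apply Rle_trans with (T b i); auto.
        apply T_monotone; auto. intros j Hj. apply Hbox; auto.
    - unfold v. destruct Compare_dec.lt_dec; [lia|auto].
    - rewrite Hvi by auto. apply T_monotone; auto.
      intros j Hj. rewrite Hvi by auto. auto. }
  exists u. split; [intros i Hi; apply Hbox; auto|].
  intros i Hi. apply Rle_antisym; auto.
  pose proof (subfixpoint_sup_ge v i Hv) as Hvu. unfold v in Hvu.
  destruct Compare_dec.lt_dec; [auto|lia].
Qed.

End MonotoneFixpoint.

Section Multicast.

Variable N : nat.
Variable K : nat -> nat.
Variable g : nat -> nat -> nat -> R.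
Variable sigma2 : R.

Hypothesis HK : forall i, (i < N)%nat -> (1 <= K i)%nat.
Hypothesis Hg_nonneg : forall i k j, (i < N)%nat -> (k < K i)%nat -> (j < N)%nat ->
  0 <= g i k j.
Hypothesis Hg_direct : forall i k, (i < N)%nat -> (k < K i)%nat -> 0 < g i k i.
Hypothesis Hsigma : 0 < sigma2.

Definition Nonneg (p : nat -> R) : Prop := forall j, (j < N)%nat -> 0 <= p j.

(* sinr_rx N g sigma2 p i k = p i / rx_interference p i k. *)
Definition rx_interference (p : nat -> R) (i k : nat) : R :=
  (interference N g p i k + sigma2) / g i k i.

Definition session_interference (p : nat -> R) (i : nat) : R :=
  fold_right Rmax (rx_interference p i 0) (map (rx_interference p i) (seq 0 (K i))).

Lemma interference_le p q i k : (i < N)%nat -> (k < K i)%nat ->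
  (forall j, (j < N)%nat -> p j <= q j) ->
  interference N g p i k <= interference N g q i k.
Proof.
  intros Hi Hk Hpq. apply fold_right_Rplus_map_le.
  intros j Hj. apply in_seq in Hj. destruct Nat.eq_dec; [lra|].
  apply Rmult_le_compat_l; [apply Hg_nonneg|apply Hpq]; lia.
Qed.

Lemma interference_nonneg p i k : (i < N)%nat -> (k < K i)%nat -> Nonneg p ->
  0 <= interference N g p i k.
Proof.
  intros Hi Hk Hp. apply fold_right_Rplus_map_nonneg.
  intros j Hj. apply in_seq in Hj. destruct Nat.eq_dec; [lra|].
  apply Rmult_le_pos; [apply Hg_nonneg|apply Hp]; lia.
Qed.

Lemma rx_interference_pos p i k : (i < N)%nat -> (k < K i)%nat -> Nonneg p ->
  0 < rx_interference p i k.
Proof.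
  intros Hi Hk Hp. apply Rdiv_lt_0_compat; auto.
  pose proof (interference_nonneg p i k Hi Hk Hp); lra.
Qed.

Lemma rx_interference_le p q i k : (i < N)%nat -> (k < K i)%nat ->
  (forall j, (j < N)%nat -> p j <= q j) ->
  rx_interference p i k <= rx_interference q i k.
Proof.
  intros Hi Hk Hpq. unfold rx_interference, Rdiv. apply Rmult_le_compat_r.
  - left; apply Rinv_0_lt_compat; auto.
  - pose proof (interference_le p q i k Hi Hk Hpq); lra.
Qed.

Lemma session_interference_pos p i : (i < N)%nat -> Nonneg p ->
  0 < session_interference p i.
Proof.
  intros Hi Hp.
  pose proof (fold_right_Rmax_seed_le (seq 0 (K i)) (rx_interference p i)
                                      (rx_interference p i 0)).
  pose proof (rx_interference_pos p i 0 Hi ltac:(specialize (HK i Hi); lia) Hp).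
  unfold session_interference; lra.
Qed.

Lemma session_interference_le p q i : (i < N)%nat ->
  (forall j, (j < N)%nat -> p j <= q j) ->
  session_interference p i <= session_interference q i.
Proof.
  intros Hi Hpq. apply fold_right_Rmax_map_le.
  - apply rx_interference_le; [auto| |auto]. specialize (HK i Hi); lia.
  - intros k Hk. apply in_seq in Hk. apply rx_interference_le; auto; lia.
Qed.

Lemma sinr_session_div p i : (i < N)%nat -> Nonneg p ->
  sinr_session N K g sigma2 p i = p i / session_interference p i.
Proof.
  intros Hi Hp.
  assert (Hrx : forall k, In k (seq 0 (K i)) ->
            sinr_rx N g sigma2 p i k = p i / rx_interference p i k).
  { intros k Hk. apply in_seq in Hk. unfold sinr_rx, rx_interference.
    pose proof (interference_nonneg p i k Hi ltac:(lia) Hp).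
    pose proof (Hg_direct i k Hi ltac:(lia)).
    field. split; lra. }
  assert (HK0 : In 0%nat (seq 0 (K i))).
  { apply in_seq. specialize (HK i Hi). lia. }
  unfold sinr_session. rewrite (Hrx 0%nat HK0), (map_ext_in _ _ _ Hrx).
  apply fold_right_Rmin_div; [apply Hp; auto| |].
  - apply rx_interference_pos; auto.
  - intros k Hk. apply in_seq in Hk. apply rx_interference_pos; auto; lia.
Qed.

End Multicast.

Theorem proposition1
  (N : nat) (K : nat -> nat) (g : nat -> nat -> nat -> R) (sigma2 : R)
  (HN : (2 <= N)%nat)
  (HK : forall i, (i < N)%nat -> (1 <= K i)%nat)
  (Hg_nonneg : forall i k j, (i < N)%nat -> (k < K i)%nat -> (j < N)%nat ->
      0 <= g i k j)
  (Hg_direct : forall i k, (i < N)%nat -> (k < K i)%nat -> 0 < g i k i)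
  (Hsigma : 0 < sigma2)
  (mu : nat -> R)
  (Hmu : forall i, (i < N)%nat -> 0 <= mu i) :
  (exists pstar : nat -> R,
      (forall i, (i < N)%nat -> 0 <= pstar i) /\
      (forall i, (i < N)%nat -> sinr_session N K g sigma2 pstar i = mu i))
  <->
  (exists p' : nat -> R,
      (forall i, (i < N)%nat -> 0 <= p' i) /\
      (forall i, (i < N)%nat -> mu i <= sinr_session N K g sigma2 p' i)).
Proof.
  split.
  { intros [p [Hp Hsinr]]. exists p. split; auto.
    intros i Hi; rewrite Hsinr by auto; lra. }
  intros [p' [Hp' Hfeas]].
  set (I := session_interference N K g sigma2).
  destruct (monotone_box_fixpoint N (fun p i => mu i * I p i) p')
    as [u [Hu Hfix]]; auto.
  - intros p q Hpq i Hi. apply Rmult_le_compat_l; auto.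
    apply session_interference_le; auto.
  - intros i Hi. apply Rmult_le_pos; auto.
    left; apply session_interference_pos; auto. intros j _; lra.
  - intros i Hi. specialize (Hfeas i Hi).
    rewrite sinr_session_div in Hfeas by auto.
    assert (HI : 0 < I p' i) by (apply session_interference_pos; auto).
    apply Rmult_le_compat_r with (r := I p' i) in Hfeas; [|lra].
    unfold Rdiv in Hfeas. rewrite Rmult_assoc, Rinv_l in Hfeas by lra. lra.
  - exists u. split; auto. intros i Hi.
    assert (HI : 0 < I u i) by (apply session_interference_pos; auto).
    rewrite sinr_session_div, <- (Hfix i Hi) by auto. fold I. field. lra.
Qed.
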